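(* Let $m$ be a positive integer written in binary as $m=\sum_{j=1}^{s}2^{m_j}$ with natural numbers $m_1>m_2>\dots>m_s\ge0$. Then $s_k(m)=0$ for all natural numbers $k\ne m_1,\,m_1-1$.
   Context: For a natural number $m>0$ and $k\in\{0,1,2,\dots\}$, let $S_k(m)$ be the set of all finite sequences $((m_1,l_1),(m_2,l_2),\dots,(m_t,l_t))$ with $t\ge1$ of pairs of natural numbers such that $k=m_1>m_2>\dots>m_t\ge0$, $m_j\ge l_j\ge0$ for $j=1,\dots,t$, and $m=\sum_{j=1}^{t}\sum_{p=0}^{l_j}2^{m_j-p}$. Let $s_k(m)=|S_k(m)|$. (In the claim, the $m_j$ denote the binary digits positions of $m$, independent of the notation inside the definition of $S_k(m)$.) *)

From mathcomp Require Import all_boot.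
Set Implicit Arguments. Unset Strict Implicit. Unset Printing Implicit Defensive.

Definition pair_val (x : nat * nat) : nat :=
  \sum_(0 <= p < x.2.+1) 2 ^ (x.1 - p).

(* Membership in S_k(m): the sequence ((m_1,l_1),...,(m_t,l_t)) with t >= 1,
   k = m_1 > m_2 > ... > m_t >= 0, m_j >= l_j >= 0, and
   m = sum_j sum_{p=0}^{l_j} 2^(m_j - p). *)
Definition in_S (k m : nat) (s : seq (nat * nat)) : Prop :=
  [/\ 0 < size s,
      head 0 (map fst s) = k,
      sorted gtn (map fst s),
      all (fun x : nat * nat => x.2 <= x.1) s
    & m = \sum_(x <- s) pair_val x].

(* s_k(m) = |S_k(m)| = 0 iff S_k(m) is empty. *)
Definition s_is_zero (k m : nat) : Prop := forall s, ~ in_S k m s.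

(** A sequence of pairs in S_k(m) has leading block 2^k + ... + 2^(k-l_1), which lies in
    [2^k, 2^(k+1)), and all later blocks start strictly below k; so m lies in
    [2^k, 2^(k+2)).  Since m also lies in [2^(m_1), 2^(m_1+1)), comparing binary lengths
    leaves only k = m_1 and k = m_1 - 1. *)

From mathcomp Require Import all_boot.
From mathcomp Require Import zify.

Set Implicit Arguments.
Unset Strict Implicit.
Unset Printing Implicit Defensive.

Lemma trunc_log_window p a b m :
  1 < p -> p ^ a <= m < p ^ b -> a <= trunc_log p m < b.
Proof.
move=> p_gt1 /andP[le_pa_m lt_m_pb]; apply/andP; split.
  exact: trunc_log_max.
have m_gt0 : 0 < m by apply: leq_trans le_pa_m; rewrite expn_gt0 ltnW.
by rewrite -(ltn_exp2l _ _ p_gt1) (leq_ltn_trans (trunc_logP p_gt1 m_gt0)).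
Qed.

Lemma sum_lt_exp2_path (T : eqType) (f w : T -> nat) d n (s : seq T) :
  {in s, forall x, w x <= 2 ^ (f x + d)} ->
  path gtn n (map f s) -> \sum_(x <- s) w x < 2 ^ (n + d).
Proof.
elim: s n => [|x s IHs] n w_le /=; first by rewrite big_nil expn_gt0.
case/andP=> lt_fx_n path_s; rewrite big_cons.
have sum_s_lt : \sum_(y <- s) w y < 2 ^ (f x + d).
  by apply: IHs path_s => y s_y; apply: w_le; rewrite inE s_y orbT.
have w_x_le : w x <= 2 ^ (f x + d) by apply: w_le; rewrite inE eqxx.
have : 2 ^ (f x + d).+1 <= 2 ^ (n + d) by rewrite leq_exp2l // ltn_add2r.
rewrite expnS; lia.
Qed.

Lemma pair_val_add_exp2 a l :
  l <= a -> pair_val (a, l) + 2 ^ (a - l) = 2 ^ a.+1.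
Proof.
rewrite /pair_val /=; elim: l => [|l IHl] le_la.
  by rewrite big_nat1 subn0 expnS mul2n addnn.
rewrite big_nat_recr //= -addnA -IHl 1?ltnW //.
have -> : a - l = (a - l.+1).+1 by lia.
by rewrite expnS mul2n addnn.
Qed.

Lemma pair_val_lt x : x.2 <= x.1 -> pair_val x < 2 ^ x.1.+1.
Proof.
case: x => a l /= le_la; rewrite -(pair_val_add_exp2 le_la).
by rewrite -addn1 leq_add2l expn_gt0.
Qed.

Lemma pair_val_ge x : 2 ^ x.1 <= pair_val x.
Proof. by rewrite /pair_val big_ltn // subn0 leq_addr. Qed.

Lemma in_S_bounds k m s : in_S k m s -> 2 ^ k <= m < 2 ^ k.+2.
Proof.
case: s => [|x s] [] //= _ <- sorted_s /andP[le_x all_s] ->.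
apply/andP; split; first by rewrite big_cons (leq_trans (pair_val_ge x)) ?leq_addr.
rewrite -[x.1.+2]addn1; apply: sum_lt_exp2_path => /=.
  move=> y x_s_y; rewrite addn1; apply/ltnW/pair_val_lt.
  by move: x_s_y; rewrite inE => /predU1P[-> | /(allP all_s)].
by rewrite ltnSn.
Qed.

Lemma sum_exp2_sorted_bounds M ms :
  sorted gtn (M :: ms) -> 2 ^ M <= \sum_(j <- M :: ms) 2 ^ j < 2 ^ M.+1.
Proof.
move=> sorted_ms; rewrite {1}big_cons leq_addr /= -(addn0 M.+1).
apply: (@sum_lt_exp2_path _ id) => [j _|]; first by rewrite addn0.
by rewrite map_id /= ltnSn.
Qed.

Theorem lemma4p4 (m : nat) (ms : seq nat) :
  0 < m ->
  ms != [::] ->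
  sorted gtn ms ->
  m = \sum_(j <- ms) 2 ^ j ->
  forall k : nat, k != head 0 ms -> k != head 0 ms - 1 -> s_is_zero k m.
Proof.
case: ms => [|M ms] //= _ _ sorted_ms m_def k neq_kM neq_kM1 s s_in_S.
have /(trunc_log_window (ltnSn 1))/andP[le_M lt_M] := sum_exp2_sorted_bounds sorted_ms.
have /(trunc_log_window (ltnSn 1))/andP[le_k lt_k] := in_S_bounds s_in_S.
rewrite -m_def in le_M lt_M; lia.
Qed.
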